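(* Every alternating $2$-regular partition $\lambda$ is obtained from the empty partition by a finite sequence of operations, each of which sends an alternating partition $\mu$ to an alternating partition and is of one of the following two types: (1) (widening) $\mu\mapsto \tilde f_\epsilon^{\,b(\mu)}\mu$ for some $\epsilon\in\{0,1\}$, where $b(\mu)$ is the number of nonzero parts of $\mu$; (2) (deepening) $\mu\mapsto s_\epsilon\mu$ for some $\epsilon\in\{0,1\}$, the action of the simple reflection $s_\epsilon$ on the crystal $B(\Lambda_0)$.
   Context: Setting (level one, $e=2$): $B(\Lambda_0)$ is the crystal of the basic representation of affine $A^{(1)}_1$ (simple roots $\alpha_0,\alpha_1$, coroots $h_0,h_1$), whose elements are labelled by $2$-regular (strict) partitions via the Misra–Miwa/Kleshchev realization, node $(x,y)$ (row $x$, column $y$) having residue $(y-x)\bmod 2$, with Kashiwara operators $\tilde e_i,\tilde f_i$. A $2$-regular partition is \emph{alternating} if the parities of consecutive nonzero parts alternate. The simple reflection acts on a crystal by $s_i b=\tilde f_i^{\,k}b$ if $k=\langle \mathrm{wt}(b),h_i\rangle\ge0$ and $s_ib=\tilde e_i^{\,-k}b$ if $k<0$. *)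

(* Level-one crystal B(Lambda_0) of affine A_1^(1) (e = 2)
   realized on 2-regular (= strict) partitions, Misra--Miwa/Kleshchev style. *)
From HB Require Import structures.
From mathcomp Require Import all_boot all_order all_algebra.
Set Implicit Arguments. Unset Strict Implicit. Unset Printing Implicit Defensive.
Import Order.TTheory GRing.Theory Num.Theory.

(* A partition is a list of its nonzero parts, weakly decreasing. *)
Definition partition := seq nat.

Definition two_regular (p : partition) : bool :=
  sorted (fun a b => b < a) p && all (fun a => 0 < a) p.

Definition alternating (p : partition) : bool :=
  two_regular p && sorted (fun a b => odd a != odd b) p.

Definition nparts (p : partition) : nat := size p.

(* residue of node (x,y) (row x, column y, 1-indexed) : (y - x) mod 2,
   computed as (y + x) mod 2 (equal since 2x = 0 mod 2). *)
Definition res (x y : nat) : nat := (y + x) %% 2.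

(* length of row x (1-indexed); 0 beyond the last row *)
Definition part (p : partition) (x : nat) : nat := nth 0 p x.-1.

Definition addable (p : partition) (x : nat) : bool :=
  [&& 0 < x, x <= (size p).+1 & (x == 1) || (part p x < part p x.-1)].

Definition removable (p : partition) (x : nat) : bool :=
  [&& 0 < x, x <= size p & part p x.+1 < part p x].

(* i-signature: addable (true = +) and removable (false = -) i-nodes, read
   from the top row to the bottom row (each row carries at most one i-node
   among its addable/removable nodes). *)
Definition signature (p : partition) (i : nat) : seq (nat * bool) :=
  flatten [seq (if addable p x && (res x (part p x).+1 == i)
                then [:: (x, true)] else [::]) ++
               (if removable p x && (res x (part p x) == i)
                then [:: (x, false)] else [::])
          | x <- iota 1 (size p).+1].

(* cancel adjacent (+,-) pairs repeatedly; result has the form - ... - + ... + *)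
Definition red_step (st : seq (nat * bool)) (n : nat * bool) : seq (nat * bool) :=
  match n.2, st with
  | false, (_, true) :: st' => st'
  | _, _ => n :: st
  end.

Definition reduced_signature (p : partition) (i : nat) : seq (nat * bool) :=
  rev (foldl red_step [::] (signature p i)).

Definition add_node (p : partition) (x : nat) : partition :=
  if x == (size p).+1 then rcons p 1 else set_nth 0 p x.-1 (part p x).+1.

Definition remove_node (p : partition) (x : nat) : partition :=
  filter (fun a => 0 < a) (set_nth 0 p x.-1 (part p x).-1).

(* Kashiwara operators; None stands for 0. f adds the leftmost uncancelled +
   (the good addable node), e removes the rightmost uncancelled - (the good
   removable node). *)
Definition ftil (i : nat) (p : partition) : option partition :=
  match [seq n.1 | n <- reduced_signature p i & n.2] with
  | x :: _ => Some (add_node p x)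
  | [::] => None
  end.

Definition etil (i : nat) (p : partition) : option partition :=
  match rev [seq n.1 | n <- reduced_signature p i & ~~ n.2] with
  | x :: _ => Some (remove_node p x)
  | [::] => None
  end.

Definition iter_opt (k : nat) (g : partition -> option partition)
  (p : partition) : option partition :=
  iter k (fun o => obind g o) (Some p).

Definition nres (p : partition) (j : nat) : nat :=
  sumn [seq count (fun y => res x y == j) (iota 1 (part p x)) | x <- iota 1 (size p)].

(* <wt(b), h_i>, with wt(b) = Lambda_0 - sum over nodes of alpha_{res};
   Cartan matrix of A_1^(1): <alpha_i,h_i> = 2, <alpha_{1-i},h_i> = -2. *)
Definition wt_h (p : partition) (i : nat) : int :=
  ((i == 0%N)%:Z - 2%:Z * (nres p i)%:Z + 2%:Z * (nres p (1 - i))%:Z)%R.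

Definition sref (i : nat) (p : partition) : option partition :=
  match wt_h p i with
  | Posz k => iter_opt k (ftil i) p
  | Negz k => iter_opt k.+1 (etil i) p   (* Negz k = -(k+1) *)
  end.

Definition op_step (mu nu : partition) : bool :=
  [&& alternating mu, alternating nu &
   [exists eps : 'I_2,
      (iter_opt (nparts mu) (ftil eps) mu == Some nu)
      || (sref eps mu == Some nu)]].

From mathcomp Require Import all_boot all_order all_algebra zify.
Set Implicit Arguments. Unset Strict Implicit. Unset Printing Implicit Defensive.

(* Let mu be alternating with b rows and let c be the parity of its first part.
   Adding one node to each of the top k rows of mu gives a partition whose
   c-signature is  - ^k  + ^(b-k), followed by one more + (a new row) when the
   last part of mu is odd; nothing cancels, so f_c adds a node to row k+1.
   Hence f_c^b widens mu (one node added to every row) and, since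
   <wt mu, h_c> = b+1 when the last part is odd, s_c mu = f_c^(b+1) mu deepens
   it (widening followed by a new row of length 1).  Conversely, removing one
   node from every row of a nonempty alternating partition (and the last row
   if it has length 1) yields an alternating partition with a smaller first
   part, from which it is recovered by one of these two steps. *)

Definition alt_rows (p : seq nat) : Prop :=
  [/\ forall j, j < size p -> 0 < nth 0 p j,
      forall j, j.+1 < size p -> nth 0 p j.+1 < nth 0 p j &
      forall j, j.+1 < size p -> odd (nth 0 p j) != odd (nth 0 p j.+1)].

Lemma alternatingP p : reflect (alt_rows p) (alternating p).
Proof.
apply: (iffP idP).
  by case/andP => /andP[/(sortedP 0) dec /(all_nthP 0) pos] /(sortedP 0) par.
case=> pos dec par; apply/andP; split; [apply/andP; split |].
- exact/(sortedP 0).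
- exact/(all_nthP 0).
- exact/(sortedP 0).
Qed.

Section AlternatingRows.

Variable p : seq nat.
Hypothesis altp : alt_rows p.

Lemma alt_rows_parity j : j < size p -> odd (nth 0 p j) = odd (nth 0 p 0) (+) odd j.
Proof.
have [_ _ par] := altp; elim: j => [|j IHj] hj; first by rewrite addbF.
have := par j hj; rewrite IHj ?(ltnW hj) // oddS addbN.
by case: (odd (nth 0 p j.+1)); case: (_ (+) _).
Qed.

Lemma alt_rows_last_leq j : j < size p -> last 0 p <= nth 0 p j.
Proof.
have [_ dec _] := altp; rewrite -nth_last => hj.
have: j <= (size p).-1 by lia.
elim: (size p).-1 => [|i IHi]; first by rewrite leqn0 => /eqP->.
rewrite leq_eqVlt => /orP[/eqP<- // | /IHi]; apply: leq_trans.
by case: (ltnP i.+1 (size p)) => [/dec/ltnW | hi]; last rewrite nth_default.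
Qed.

End AlternatingRows.

Definition incr_rows (k : nat) (m : seq nat) : seq nat :=
  mkseq (fun j => nth 0 m j + (j < k)) (size m).

Definition widen (m : seq nat) : seq nat := map succn m.

Definition deepen (m : seq nat) : seq nat := rcons (widen m) 1.

Lemma size_incr_rows k m : size (incr_rows k m) = size m.
Proof. exact: size_mkseq. Qed.

Lemma nth_incr_rows k m j :
  nth 0 (incr_rows k m) j = if j < size m then nth 0 m j + (j < k) else 0.
Proof.
case: ifP => hj; first by rewrite nth_mkseq.
by rewrite nth_default // size_incr_rows leqNgt hj.
Qed.

Lemma incr_rows0 m : incr_rows 0 m = m.
Proof.
apply: (@eq_from_nth _ 0) => [|j]; rewrite size_incr_rows // => hj.
by rewrite nth_incr_rows hj addn0.
Qed.

Lemma incr_rows_size m : incr_rows (size m) m = widen m.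
Proof.
apply: (@eq_from_nth _ 0) => [|j]; rewrite size_incr_rows ?size_map // => hj.
by rewrite nth_incr_rows (nth_map 0) hj ?addn1.
Qed.

Lemma alt_rows_widen m : alt_rows m -> alt_rows (widen m).
Proof.
case=> pos dec par; split; rewrite size_map => j hj.
- by rewrite (nth_map 0).
- by rewrite !(nth_map 0) ?ltnS ?(dec j) // ltnW.
- by rewrite !(nth_map 0) ?(ltnW hj) //= (inj_eq negb_inj) par.
Qed.

Lemma alt_rows_odd_last m : alt_rows m -> 0 < size m ->
  odd (last 0 m) = (odd (size m) == odd (nth 0 m 0)).
Proof.
move=> altm m_gt0; rewrite -nth_last alt_rows_parity ?prednK //.
by case: (size m) m_gt0 => //= b _; case: (odd _); case: (odd b).
Qed.

(* By alt_rows_odd_last, the parity hypothesis says that m is empty or has an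
   odd last part. *)
Lemma alt_rows_deepen m : alt_rows m -> odd (size m) = odd (nth 0 m 0) ->
  alt_rows (deepen m).
Proof.
move=> altm odd_size; have [posm _ _] := altm.
have [pos dec par] := alt_rows_widen altm.
rewrite size_map in pos dec par.
split; rewrite size_rcons size_map => j hj; rewrite !nth_rcons size_map.
- case: (ltnP j (size m)) => hjm; first exact: pos.
  by have -> : j == size m by lia.
- case: (ltnP j.+1 (size m)) => hjm; first by rewrite (ltnW hjm) dec.
  have [e hjm'] : j.+1 = size m /\ j < size m by lia.
  by rewrite e eqxx leqnn (nth_map 0) // ltnS posm.
- case: (ltnP j.+1 (size m)) => hjm; first by rewrite (ltnW hjm) par.
  have [e hjm'] : j.+1 = size m /\ j < size m by lia.
  have := alt_rows_odd_last altm; rewrite odd_size eqxx -e => /(_ isT).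
  by rewrite e eqxx leqnn (nth_map 0) // -nth_last -e /= => ->.
Qed.

Definition sig_entry (p : seq nat) (i x : nat) : seq (nat * bool) :=
  (if addable p x && (res x (part p x).+1 == i) then [:: (x, true)] else [::]) ++
  (if removable p x && (res x (part p x) == i) then [:: (x, false)] else [::]).

Lemma signatureE p i :
  signature p i = flatten [seq sig_entry p i x | x <- iota 1 (size p).+1].
Proof. by []. Qed.

Definition signed_rows (ms ps : seq nat) : seq (nat * bool) :=
  [seq (x, false) | x <- ms] ++ [seq (x, true) | x <- ps].

Lemma foldl_red_step_minus st ms : all (fun n => ~~ n.2) st ->
  foldl red_step st [seq (x, false) | x <- ms] = rev [seq (x, false) | x <- ms] ++ st.
Proof.
elim: ms st => [// | x ms IHms] [| [y b] st] //= st_minus.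
  by rewrite IHms // rev_cons cat_rcons.
by move: st_minus; case: b => //= st_minus; rewrite IHms /= ?st_minus // rev_cons cat_rcons.
Qed.

Lemma foldl_red_step_plus st ps :
  foldl red_step st [seq (x, true) | x <- ps] = rev [seq (x, true) | x <- ps] ++ st.
Proof. by elim: ps st => [// | x ps IHps] st /=; rewrite IHps rev_cons cat_rcons. Qed.

Lemma reduced_signed_rows ms ps :
  rev (foldl red_step [::] (signed_rows ms ps)) = signed_rows ms ps.
Proof.
by rewrite foldl_cat foldl_red_step_minus // foldl_red_step_plus cats0 -rev_cat revK.
Qed.

Lemma plus_signed_rows ms ps : [seq n.1 | n <- signed_rows ms ps & n.2] = ps.
Proof.
rewrite filter_cat map_cat; elim: ms => [| x ms IHms] //=.
by elim: ps => [| x ps IHps] //=; rewrite IHps.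
Qed.

Lemma resE x y : res x y = odd (y + x).
Proof. by rewrite /res modn2. Qed.

Lemma add_node_incr_rows k m : k < size m ->
  add_node (incr_rows k m) k.+1 = incr_rows k.+1 m.
Proof.
move=> hk; rewrite /add_node size_incr_rows ifN; last by rewrite eqSS neq_ltn hk.
apply: (@eq_from_nth _ 0) => [|j]; rewrite size_set_nth !size_incr_rows.
  exact/maxn_idPr.
rewrite (maxn_idPr hk) => hj; rewrite nth_set_nth /= /part /= !nth_incr_rows hk hj.
case: eqP => [-> | /eqP ne]; first by rewrite ltnSn ltnn addn1 addn0.
by rewrite ltnS; case: ltngtP ne.
Qed.

Lemma count_res x (t : bool) a n :
  count (fun y => res x y == t) (iota a n) = n./2 + (odd n && (odd (a + x) == t)).
Proof.
elim: n a => [// | n IHn] a; rewrite [iota _ _]/= /= IHn resE addSn oddS uphalf_half.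
by case: (odd n); case: (odd (a + x)); case: (t) => /=; lia.
Qed.

Lemma nresE p (t : bool) : nres p t =
  \sum_(x <- iota 1 (size p)) ((part p x)./2 + (odd (part p x) && (odd x.+1 == t))).
Proof. by rewrite /nres sumnE big_map; apply: eq_bigr => x _; rewrite count_res. Qed.

Section Widening.

Variable m : seq nat.
Hypothesis altm : alt_rows m.
Let c := odd (nth 0 m 0).

Lemma sig_entry_incr_rows k j : j < size m ->
  sig_entry (incr_rows k m) c j.+1 = [:: (j.+1, k <= j)].
Proof.
move=> hj; have [_ dec _] := altm; have par := alt_rows_parity altm hj.
rewrite /sig_entry /addable /removable /part /= !resE size_incr_rows !nth_incr_rows hj.
rewrite !(addSn, addnS, oddS, oddD) par /c.
case: (ltnP j k) => hjk /=.
  have -> : (if j.+1 < size m then nth 0 m j.+1 + (j.+1 < k) else 0) < nth 0 m j + 1.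
    by case: ifP => [/dec | _]; [case: (_ < k) => /= |]; lia.
  by case: (odd (nth 0 m 0)); case: (odd j); rewrite /= ?andbF.
have -> : (j.+1 == 1) ||
          (nth 0 m j + 0 < (if j.-1 < size m then nth 0 m j.-1 + (j.-1 < k) else 0)).
  by case: j hj {hjk par} => //= j hj; rewrite (ltnW hj) addn0 ltn_addr ?dec.
by rewrite ltnS (ltnW hj); case: (odd (nth 0 m 0)); case: (odd j); rewrite /= ?andbF.
Qed.

Lemma sig_entry_new_row k : sig_entry (incr_rows k m) c (size m).+1 =
  [seq (x, true) | x <- nseq (odd (size m) == c) (size m).+1].
Proof.
have [pos _ _] := altm.
rewrite /sig_entry /addable /removable /part /= !resE size_incr_rows ltnn cats0.
rewrite [nth _ _ (size m)]nth_default ?size_incr_rows // ltnSn /=.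
have -> : ((size m).+1 == 1) || (0 < nth 0 (incr_rows k m) (size m).-1).
  have [-> // | m_gt0] := posnP (size m).
  by rewrite nth_incr_rows ltn_predL m_gt0 ltn_addr ?pos ?orbT ?ltn_predL.
by rewrite negbK /c; case: (odd (size m)); case: (odd (nth 0 m 0)).
Qed.

Lemma signature_incr_rows k : k <= size m ->
  signature (incr_rows k m) c =
  signed_rows (iota 1 k) (iota k.+1 (size m - k) ++ nseq (odd (size m) == c) (size m).+1).
Proof.
move=> hk; have entries :
    {in iota 1 (size m), sig_entry (incr_rows k m) c =1 fun x => [:: (x, k < x)]}.
  by move=> [|j]; rewrite mem_iota //= add1n ltnS => hj; rewrite sig_entry_incr_rows.
rewrite signatureE size_incr_rows.
have -> : iota 1 (size m).+1 = iota 1 (size m) ++ [:: (size m).+1].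
  by rewrite -[in LHS](addn1 (size m)) iotaD add1n.
rewrite map_cat flatten_cat ((eq_in_map _ _ _).1 entries) flatten_map1 /=.
rewrite sig_entry_new_row cats0.
rewrite /signed_rows map_cat catA.
have -> : iota 1 (size m) = iota 1 k ++ iota k.+1 (size m - k) by rewrite -iotaD subnKC.
rewrite map_cat; congr ((_ ++ _) ++ _); apply/eq_in_map => x; rewrite mem_iota.
  by case/andP => _; rewrite add1n ltnS leqNgt => /negbTE ->.
by case/andP => ->.
Qed.

Lemma ftil_incr_rows k : k < size m -> ftil c (incr_rows k m) = Some (incr_rows k.+1 m).
Proof.
move=> hk; rewrite /ftil /reduced_signature signature_incr_rows ?(ltnW hk) //.
rewrite reduced_signed_rows plus_signed_rows -subnSK //=.
by rewrite add_node_incr_rows.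
Qed.

Lemma ftil_widen : odd (size m) = c -> ftil c (widen m) = Some (deepen m).
Proof.
move=> odd_size; rewrite -incr_rows_size /ftil /reduced_signature signature_incr_rows //.
rewrite reduced_signed_rows plus_signed_rows subnn odd_size eqxx /=.
by rewrite /add_node size_incr_rows eqxx incr_rows_size.
Qed.

Lemma iter_ftil_incr_rows k : k <= size m -> iter_opt k (ftil c) m = Some (incr_rows k m).
Proof.
elim: k => [|k IHk] hk; first by rewrite incr_rows0.
by rewrite /iter_opt iterS -/(iter_opt _ _ _) IHk ?(ltnW hk) //= ftil_incr_rows.
Qed.

Lemma alt_rows_odd_part x : x \in iota 1 (size m) -> odd (part m x) = (odd x == c).
Proof.
case: x => [|j]; rewrite mem_iota //= add1n ltnS => hj.
by rewrite /part /= alt_rows_parity // /c; case: (odd (nth 0 m 0)); case: (odd j).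
Qed.

Lemma wt_h_deepenable : odd (size m) = c -> wt_h m c = Posz (size m).+1.
Proof.
(* Each row of odd length has one more node of residue ~~ c than of residue c,
   and the other rows are balanced. *)
move=> odd_size; set H := \sum_(x <- iota 1 (size m)) (part m x)./2.
have nres_c : nres m c = H.
  rewrite nresE big_split /= [X in _ + X]big1_seq ?addn0 //.
  move=> x /andP[_ /alt_rows_odd_part ->].
  by case: (odd x); case: (c).
have nres_Nc : nres m (~~ c) = H + count (fun y => res 0 y == c) (iota 1 (size m)).
  rewrite nresE big_split -sumn_count sumnE big_map; congr (_ + _); apply: eq_big_seq.
  by move=> x /alt_rows_odd_part ->; rewrite resE addn0 oddS; case: (odd x); case: (c).
rewrite /wt_h (_ : subn 1 c = ~~ c); last by case: (c).
rewrite nres_c nres_Nc count_res add1n /=; move: odd_size.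
have := odd_double_half (size m); rewrite /c.
by case: (odd (size m)); case: (odd (nth 0 m 0)) => //= E _; rewrite -[in RHS]E -!muln2; lia.
Qed.

End Widening.

Lemma op_step_widen m : alt_rows m -> op_step m (widen m).
Proof.
move=> altm; apply/and3P; split; [exact/alternatingP | exact/alternatingP/alt_rows_widen |].
apply/existsP; exists (@Ordinal 2 _ (leq_b1 (odd (nth 0 m 0)))); apply/orP; left.
by rewrite /nparts /= iter_ftil_incr_rows // incr_rows_size.
Qed.

Lemma op_step_deepen m : alt_rows m -> odd (size m) = odd (nth 0 m 0) ->
  op_step m (deepen m).
Proof.
move=> altm odd_size; apply/and3P; split; first exact/alternatingP.
  exact/alternatingP/alt_rows_deepen.
apply/existsP; exists (@Ordinal 2 _ (leq_b1 (odd (nth 0 m 0)))); apply/orP; right.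
rewrite /sref /= wt_h_deepenable // /iter_opt iterS -/(iter_opt _ _ _).
by rewrite iter_ftil_incr_rows // incr_rows_size /= ftil_widen.
Qed.

Lemma widen_map_predn p : alt_rows p -> widen (map predn p) = p.
Proof.
case=> pos _ _; apply: (@eq_from_nth _ 0) => [|j]; rewrite !size_map // => hj.
by rewrite !(nth_map 0) ?size_map // prednK ?pos.
Qed.

Lemma alt_rows_map_predn p : alt_rows p -> 1 < last 0 p -> alt_rows (map predn p).
Proof.
move=> altp last_gt1; have [_ dec par] := altp.
have gt1 j : j < size p -> 1 < nth 0 p j.
  by move=> hj; apply: leq_trans last_gt1 (alt_rows_last_leq altp hj).
split; rewrite size_map => j hj; rewrite !(nth_map 0) ?(ltnW hj) //.
- by have := gt1 j hj; lia.
- by have := dec j hj; have := gt1 j.+1 hj; lia.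
- rewrite -!subn1 !oddB ?(ltnW (gt1 _ _)) ?(ltnW hj) //= !addbT (inj_eq negb_inj).
  exact: par.
Qed.

Lemma alt_rows_rconsK s a : alt_rows (rcons s a) -> alt_rows s.
Proof.
case=> pos dec par; rewrite size_rcons in pos dec par.
split=> j hj.
- by have := pos j (ltnW hj); rewrite nth_rcons hj.
- by have := dec j (ltnW hj); rewrite !nth_rcons hj (ltnW hj).
- by have := par j (ltnW hj); rewrite !nth_rcons hj (ltnW hj).
Qed.

Lemma rcons1_deepen s : alt_rows (rcons s 1) ->
  [/\ alt_rows (map predn s), odd (size (map predn s)) = odd (nth 0 (map predn s) 0)
    & rcons s 1 = deepen (map predn s)].
Proof.
move=> alt1; have alts := alt_rows_rconsK alt1.
have [-> | s_nil] := eqVneq s [::]; first by split.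
have s_gt0 : 0 < size s by rewrite lt0n size_eq0.
have [pos _ _] := alts; have [_ dec _] := alt1; rewrite size_rcons in dec.
have last_gt1 : 1 < last 0 s.
  have := dec (size s).-1; rewrite prednK // !nth_rcons ltnn eqxx ltn_predL s_gt0.
  by rewrite nth_last => ->.
split; [exact: alt_rows_map_predn | | by rewrite /deepen widen_map_predn].
have last_row : size s < size (rcons s 1) by rewrite size_rcons.
have := alt_rows_parity alt1 last_row; rewrite !nth_rcons ltnn eqxx s_gt0.
rewrite size_map (nth_map 0) // -subn1 oddB ?(pos 0) //.
by case: (odd (nth 0 s 0)); case: (odd (size s)).
Qed.

Lemma alt_rows_descent lam : alt_rows lam -> lam != [::] ->
  exists2 mu, alt_rows mu & op_step mu lam /\ nth 0 lam 0 = (nth 0 mu 0).+1.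
Proof.
case/lastP: lam => [// | s a] altl _.
have [pos _ _] := altl; have [a1 | a_neq1] := eqVneq a 1.
  rewrite a1 in altl *; have [altmu odd_size ->] := rcons1_deepen altl.
  by exists (map predn s) => //; split; [exact: op_step_deepen | case: (map predn s)].
have last_gt1 : 1 < last 0 (rcons s a).
  have := pos (size s); rewrite size_rcons nth_rcons ltnn eqxx last_rcons => /(_ (ltnSn _)).
  by move: a_neq1 => /eqP; lia.
exists (map predn (rcons s a)); first exact: alt_rows_map_predn.
split; first by rewrite -{2}(widen_map_predn altl); apply/op_step_widen/alt_rows_map_predn.
by rewrite (nth_map 0) ?prednK ?pos ?size_rcons.
Qed.

Definition reachable (lam : seq nat) : Prop :=
  exists ms : seq (seq nat), path op_step [::] ms && (last [::] ms == lam).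

Lemma reachable_nil : reachable [::].
Proof. by exists [::]. Qed.

Lemma reachable_op_step mu lam : reachable mu -> op_step mu lam -> reachable lam.
Proof.
case=> ms /andP[ms_path /eqP ms_last] step; exists (rcons ms lam).
by rewrite rcons_path ms_path ms_last step last_rcons eqxx.
Qed.

Lemma alt_rows_reachable n lam : nth 0 lam 0 <= n -> alt_rows lam -> reachable lam.
Proof.
elim: n lam => [|n IHn] lam lam_head altl;
  have [-> | /(alt_rows_descent altl) [mu altmu [step head_mu]]] := eqVneq lam [::].
- exact: reachable_nil.
- by rewrite head_mu in lam_head.
- exact: reachable_nil.
- by apply: reachable_op_step step; apply: IHn altmu; rewrite -ltnS -head_mu.
Qed.

Theorem mainTheorem3 (lam : seq nat) :
  alternating lam ->
  exists ms : seq (seq nat), path op_step [::] ms && (last [::] ms == lam).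
Proof. by move/alternatingP; apply: alt_rows_reachable. Qed.
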